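(* Let $q$ be a prime power, let $\mathbb{F}=\mathrm{GF}(q^2)$, and let $H\subseteq \mathbb{F}^\ast$ be the subgroup of order $q+1$. Let $G=G(q^2,q+1)$ be the simple graph whose vertex set is $(\mathbb{F}\times\mathbb{F}\setminus\{(0,0)\})/\sim$, where $(a_1,b_1)\sim(a_2,b_2)$ iff there is $h\in H$ with $a_1=ha_2$ and $b_1=hb_2$, and in which two distinct vertices $\langle a,b\rangle$ and $\langle x,y\rangle$ are adjacent iff $ax+by\in H$. If $q$ is odd then $|E(G)|=\frac{1}{2}(q^5-q^4+q^3-2q^2+1)$. If $q=2^k$ then $|E(G)|=\frac{1}{2}(q^5-q^4+q^3-2q^2)$.
   Context: $\langle a,b\rangle$ denotes the equivalence class of the pair $(a,b)$; adjacency does not depend on the representatives. Loops are not edges: a vertex $\langle x,y\rangle$ with $x^2+y^2\in H$ is not adjacent to itself. *)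

From mathcomp Require Import all_boot all_order all_algebra all_field.
Set Implicit Arguments. Unset Strict Implicit. Unset Printing Implicit Defensive.
Import GRing.Theory.
Local Open Scope ring_scope.

Section Graph.
Variables (F : finFieldType) (H : {set F}).

Definition hclass (u : F * F) : {set F * F} :=
  [set (h * u.1, h * u.2) | h in H].

Definition gvertices : {set {set F * F}} :=
  [set hclass u | u in [set u : F * F | u != (0, 0)]].

Definition gadj (X Y : {set F * F}) : bool :=
  [&& X \in gvertices, Y \in gvertices, X != Y &
      [exists u in X, exists v in Y, u.1 * v.1 + u.2 * v.2 \in H]].

Definition gedges : {set {set {set F * F}}} :=
  [set E | [exists X, exists Y, gadj X Y && (E == [set X; Y])]].

End Graph.

From mathcomp Require Import all_boot all_order all_algebra all_field.
From mathcomp Require Import cyclic ring zify.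
Import GRing.Theory.
Set Implicit Arguments. Unset Strict Implicit.
Local Open Scope ring_scope.

(* Count the pairs (u, v) of vectors with u <> 0 and u.v in H.  For fixed u and h in H
   the solutions of u.v = h form an affine line of q^2 points, so there are
   (q^4 - 1)(q + 1) q^2 such pairs.  Those with <u> <> <v> lie, (q + 1)^2 at a time,
   over the ordered pairs of adjacent vertices, that is over twice the edges.  Those with
   <u> = <v> are the pairs (u, h u) with u.u in H, and there are (q + 1) N such u, where N
   counts the solutions of a^2 + b^2 = c for a fixed c in H.  For odd q, -1 is a square
   in GF(q^2), so a^2 + b^2 = c is a hyperbola and N = q^2 - 1; for even q,
   a^2 + b^2 = (a + b)^2 and N = q^2. *)

Lemma card_const_fibers (T U : finType) (A : {set T}) (B : {set U}) (f : T -> U) n :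
  {in A, forall x, f x \in B} -> {in B, forall y, #|[set x in A | f x == y]| = n} ->
  #|A| = (#|B| * n)%N.
Proof.
move=> fAB fn; rewrite -sum1_card (partition_big f (mem B)) //= -sum_nat_const.
apply: eq_bigr => y yB; rewrite -(fn y yB) -sum1_card; apply: eq_bigl => x.
by rewrite inE.
Qed.

Lemma pchar_odd_two_neq0 (R : nzRingType) p :
  p \in [pchar R] -> odd p -> (2%:R : R) != 0.
Proof.
move=> pcharRp p_odd; rewrite -(dvdn_pcharf pcharRp) dvdn_prime2 //.
  by apply: contraTneq p_odd => ->.
exact: pcharf_prime pcharRp.
Qed.

Lemma dvd4_sqr_pred q : odd q -> (4 %| (q * q).-1)%N.
Proof.
move=> q_odd; rewrite -[q](odd_double_half q) q_odd.
apply/dvdnP; exists (q./2 * q./2.+1)%N; rewrite -!muln2; lia.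
Qed.

Definition dot (R : comNzRingType) (u v : R * R) := u.1 * v.1 + u.2 * v.2.

Lemma dotC (R : comNzRingType) (u v : R * R) : dot u v = dot v u.
Proof. by rewrite /dot mulrC [u.2 * _]mulrC. Qed.

Lemma dotZl (R : comNzRingType) (h : R) (u v : R * R) :
  dot (h * u.1, h * u.2) v = h * dot u v.
Proof. by rewrite /dot /= mulrDr !mulrA. Qed.

Section FiniteFieldCounts.

Variable F : finFieldType.

Lemma card_dot_eq (u : F * F) c : u != 0 -> #|[set v | dot u v == c]| = #|F|.
Proof.
wlog a0 : u / u.1 != 0 => [wlog_u u0|_].
  have [a0|a0] := eqVneq u.1 0; last exact: wlog_u.
  have b0 : u.2 != 0 by apply: contraNneq u0; case: u a0 => a b /= -> ->.
  have swapK : involutive (fun v : F * F => (v.2, v.1)) by case.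
  rewrite -(card_preimset _ (inv_inj swapK)) -(wlog_u (u.2, u.1)) //=.
    by apply: eq_card => v; rewrite !inE /dot addrC.
  by rewrite xpair_eqE negb_and b0.
rewrite -cardsT -(card_imset _ (can_inj (g := snd)
  (f := fun t => ((c - u.2 * t) / u.1, t)) (fun _ => erefl))).
apply: eq_card => -[x y]; rewrite !inE /dot /=; apply/eqP/imsetP => [e|[t _ [-> ->]]].
  by exists y; rewrite // -e addrK [u.1 * _]mulrC mulfK.
by rewrite mulrC divfK // subrK.
Qed.

Lemma card_mul_eq (c : F) : c != 0 -> #|[set w : F * F | w.1 * w.2 == c]| = #|F|.-1.
Proof.
move=> c0; rewrite -(cardsC1 (0 : F)) -[#|[set~ _]|]muln1.
apply: (card_const_fibers (f := fst)) => [[a b]|a].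
  by rewrite !inE /=; apply: contraTneq => ->; rewrite mul0r eq_sym.
rewrite !inE => a0; rewrite -(cards1 (a, c / a)); apply: eq_card => -[x y].
rewrite !inE /= xpair_eqE andbC; apply/andP/andP => [[/eqP-> /eqP <-]|[/eqP-> /eqP->]].
  by rewrite mulrC mulKf // !eqxx.
by rewrite mulrC divfK // !eqxx.
Qed.

Lemma exists_sqrtN1 : (4 %| #|F|.-1)%N -> exists i : F, i ^+ 2 = -1.
Proof.
set n := #|F|.-1 => /dvdnP [m def_n].
have n_gt0 : (0 < n)%N by rewrite /n -subn1 subn_gt0 finNzRing_gt1.
have : has n.-primitive_root (enum [set~ (0 : F)]).
  apply: has_prim_root => //; last by rewrite -cardE cardsC1.
  - apply/allP => x; rewrite mem_enum !inE => x0; rewrite unity_rootE.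
    have := expf_card x; rewrite -(prednK (ltnW (finNzRing_gt1 F))) exprSr => e.
    by apply/eqP; apply: (mulIf x0); rewrite mul1r.
  - exact: enum_uniq.
case/hasP => z _ z_prim; exists (z ^+ m).
have : (z ^+ m) ^+ 2 ^+ 2 == 1 by rewrite -!exprM -(prim_order_dvd z_prim) def_n.
rewrite sqrf_eq1 => /orP [|/eqP //].
rewrite -exprM -(prim_order_dvd z_prim) def_n => /dvdn_leq.
by move: n_gt0; rewrite def_n; lia.
Qed.

Lemma card_dot_self_eq_sqrtN1 (i c : F) : i ^+ 2 = -1 -> 2%:R != 0 :> F -> c != 0 ->
  #|[set u : F * F | dot u u == c]| = #|F|.-1.
Proof.
move=> ii two c0; pose phi (u : F * F) := (u.1 + i * u.2, u.1 - i * u.2).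
have i0 : i != 0 by apply: contra_eq_neq ii => ->; rewrite expr0n eq_sym oppr_eq0 oner_eq0.
have phi_inj : injective phi.
  move=> [a b] [a' b'] [e1 e2] /=; congr (_, _).
    apply: (mulIf two); transitivity ((a + i * b) + (a - i * b)); first ring.
    by rewrite e1 e2; ring.
  apply: (mulIf (mulf_neq0 two i0)).
  transitivity ((a + i * b) - (a - i * b)); first ring.
  by rewrite e1 e2; ring.
have -> : [set u | dot u u == c] = phi @^-1: [set w | w.1 * w.2 == c].
  apply/setP => -[a b]; rewrite !inE /dot /=.
  suff -> : (a + i * b) * (a - i * b) = a * a + b * b by [].
  by rewrite -[b * b]opprK -[- (b * b)]mulN1r -ii; ring.
by rewrite card_preimset // card_mul_eq.
Qed.

Lemma card_dot_self_eq_pchar2 (c : F) : 2 \in [pchar F] ->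
  #|[set u : F * F | dot u u == c]| = #|F|.
Proof.
move=> pchar2; pose fr := pFrobenius_aut pchar2.
have fr_inj : injective fr := fmorph_inj _.
have /codomP [s ->] := injF_onto fr_inj c.
rewrite -(card_dot_eq s (u := (1, 1))) ?xpair_eqE ?oner_eq0 //.
apply: eq_card => -[a b]; rewrite !inE /dot /= !mul1r -[a + b == s](inj_eq fr_inj).
by rewrite /fr rmorphD !pFrobenius_autE !expr2.
Qed.

End FiniteFieldCounts.

Section Graph.

Variables (F : finFieldType) (H : {set F}).

Lemma hclassP u v :
  reflect (exists2 h, h \in H & v = (h * u.1, h * u.2)) (v \in hclass H u).
Proof. exact: imsetP. Qed.

Lemma card_hclass u : u != 0 -> #|hclass H u| = #|H|.
Proof.
move=> u0; apply: card_imset => h g [e1 e2].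
have [a0|a0] := eqVneq u.1 0; last exact: mulIf e1.
have b0 : u.2 != 0 by apply: contraNneq u0; case: u a0 {e1 e2} => a b /= -> ->.
exact: mulIf e2.
Qed.

Lemma gverticesP X : reflect (exists2 u, u != 0 & X = hclass H u) (X \in gvertices H).
Proof.
by apply: (iffP imsetP) => -[u]; rewrite ?inE => u0 ->; exists u; rewrite ?inE.
Qed.

Lemma gadj_sym X Y : gadj H X Y -> gadj H Y X.
Proof.
case/and4P => XV YV XY /exists_inP [u uX /exists_inP [v vY uvH]].
rewrite /gadj YV XV eq_sym XY; apply/exists_inP; exists v => //.
by apply/exists_inP; exists u => //; rewrite mulrC [v.2 * _]mulrC.
Qed.

Lemma card_gadj_pairs : #|[set p | gadj H p.1 p.2]| = (#|gedges H| * 2)%N.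
Proof.
apply: (card_const_fibers (f := fun p => [set p.1; p.2])) => [p|E].
  rewrite !inE => adj; apply/existsP; exists p.1.
  by apply/existsP; exists p.2; rewrite adj eqxx.
rewrite inE => /existsP [X /existsP [Y /andP [adj /eqP ->]]].
have XY : X != Y by case/and4P: adj.
have -> : 2%N = ((X, Y) != (Y, X)).+1 by rewrite xpair_eqE (negPf XY).
rewrite -cards2; apply: eq_card => -[Z W]; rewrite !inE /=.
apply/andP/orP => [[adjZW /eqP eZW]|[]/eqP[-> ->]]; last 2 first.
- by rewrite adj.
- by rewrite gadj_sym // setUC.
have Z_XY : Z \in [set X; Y] by rewrite -eZW set21.
have W_XY : W \in [set X; Y] by rewrite -eZW set22.
have : Z != W by case/and4P: adjZW.
by case/set2P: Z_XY => ->; case/set2P: W_XY => ->; rewrite ?eqxx // => _; [left | right].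
Qed.

Definition hpairs := [set w : (F * F) * (F * F) | (w.1 != 0) && (dot w.1 w.2 \in H)].

Lemma card_hpairs : #|hpairs| = ((#|F| * #|F|).-1 * (#|H| * #|F|))%N.
Proof.
have -> : (#|F| * #|F|).-1 = #|[set u : F * F | u != 0]|.
  by rewrite -card_prod -(cardsC1 (0 : F * F)); apply: eq_card => u; rewrite !inE.
apply: (card_const_fibers (f := fst)) => [w|u]; first by rewrite !inE => /andP[].
rewrite inE => u0.
have -> : [set w in hpairs | w.1 == u] = pair u @: [set v | dot u v \in H].
  apply/setP => -[x v]; rewrite !inE /=; apply/idP/imsetP => [|[t]].
    by case/andP => /andP[_ xvH] /eqP xu; exists v; rewrite ?inE -?xu.
  by rewrite inE => utH [-> ->]; rewrite u0 utH eqxx.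
rewrite (card_imset _ (can_inj (g := snd) (f := pair u) (fun _ => erefl))).
apply: (card_const_fibers (f := dot u)) => [v|c cH]; first by rewrite inE.
rewrite -(card_dot_eq c u0); apply: eq_card => v; rewrite !inE.
by apply/andP/idP => [[_ ->] //|/eqP uvc]; rewrite uvc cH.
Qed.

Lemma card_dot_self_in n : {in H, forall c, #|[set u : F * F | dot u u == c]| = n} ->
  #|[set u : F * F | dot u u \in H]| = (#|H| * n)%N.
Proof.
move=> Hn; apply: (card_const_fibers (f := fun u => dot u u)) => [u|c cH].
  by rewrite inE.
rewrite -(Hn c cH); apply: eq_card => u; rewrite !inE.
by apply/andP/idP => [[_ ->] //|/eqP uuc]; rewrite uuc cH.
Qed.

Hypotheses (H0 : 0 \notin H) (H1 : 1 \in H)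
  (HM : forall x y, x \in H -> y \in H -> x * y \in H)
  (HV : forall x, x \in H -> x^-1 \in H).

Lemma dot_in_neq0r u v : dot u v \in H -> v != 0.
Proof. by apply: contraTneq => ->; rewrite /dot !mulr0 addr0. Qed.

Lemma mem_hclass u : u \in hclass H u.
Proof. by apply/hclassP; exists 1; rewrite ?mul1r -?surjective_pairing. Qed.

Lemma hclass_id u v : v \in hclass H u -> hclass H v = hclass H u.
Proof.
case/hclassP => h hH ->; apply/setP => w; apply/hclassP/hclassP => -[g gH ->].
  by exists (g * h); rewrite ?HM //= !mulrA.
have h0 : h != 0 by apply: contraNneq H0 => <-.
by exists (g * h^-1); rewrite ?HM ?HV //= !mulrA mulfVK.
Qed.

Lemma hclass_neq0 u v : u != 0 -> v \in hclass H u -> v != 0.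
Proof.
move=> u0 /hclassP [h hH ->]; have h0 : h != 0 by apply: contraNneq H0 => <-.
apply: contraNneq u0; case: u => a b /= [/eqP + /eqP].
by rewrite !mulf_eq0 (negPf h0) => /eqP -> /eqP ->.
Qed.

Lemma dot_hclass u v u' v' : u' \in hclass H u -> v' \in hclass H v ->
  dot u v \in H -> dot u' v' \in H.
Proof.
case/hclassP => [g gH ->] /hclassP [h hH ->] uvH.
by rewrite dotZl dotC dotZl dotC !HM.
Qed.

Lemma card_hpairs_offdiag :
  #|hpairs :\: [set w | hclass H w.1 == hclass H w.2]| =
  (#|[set p | gadj H p.1 p.2]| * (#|H| * #|H|))%N.
Proof.
apply: (card_const_fibers (f := fun w => (hclass H w.1, hclass H w.2))) => [[u v]|[X Y]].
  rewrite !inE /= => /andP [uv_ne /andP [u0 uvH]].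
  have v0 := dot_in_neq0r uvH.
  apply/and4P; split=> //.
  - by apply/gverticesP; exists u.
  - by apply/gverticesP; exists v.
  apply/exists_inP; exists u; rewrite ?mem_hclass //.
  by apply/exists_inP; exists v; rewrite ?mem_hclass.
rewrite inE /= => /and4P [/gverticesP [u0 u00 ->] /gverticesP [v0 v00 ->] XY].
case/exists_inP => u uX /exists_inP [v vY uvH].
rewrite -{1}(card_hclass u00) -(card_hclass v00) -cardsX.
apply: eq_card => -[a b]; rewrite !inE /=; apply/idP/idP.
  by case/andP => _ /eqP [<- <-]; rewrite !mem_hclass.
case/andP => aX bY.
rewrite (hclass_id aX) (hclass_id bY) XY eqxx (hclass_neq0 u00 aX) /= andbT.
by apply: (dot_hclass _ _ uvH); rewrite ?(hclass_id uX) ?(hclass_id vY).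
Qed.

Lemma card_hpairs_diag :
  #|hpairs :&: [set w | hclass H w.1 == hclass H w.2]| =
  (#|[set u : F * F | dot u u \in H]| * #|H|)%N.
Proof.
apply: (card_const_fibers (f := fst)) => [[u v]|u].
  rewrite !inE /= => /andP [/andP [_ uvH] /eqP uv].
  by apply: (dot_hclass _ _ uvH); rewrite -?uv mem_hclass.
rewrite inE => uuH.
have u0 := dot_in_neq0r uuH.
rewrite -(card_hclass u0).
rewrite -[RHS](card_imset _ (can_inj (g := snd) (f := pair u) (fun _ => erefl))).
apply: eq_card => -[x v]; rewrite !inE /=; apply/idP/imsetP => [|[v' vu [-> ->]]].
  case/andP => /andP [_ /eqP xv] /eqP xu; subst x.
  by exists v; rewrite // xv mem_hclass.
by rewrite u0 (dot_hclass (mem_hclass u) vu uuH) (hclass_id vu) !eqxx.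
Qed.

Lemma gedges_double_count :
  (#|gedges H| * 2 * (#|H| * #|H|) + #|[set u : F * F | dot u u \in H]| * #|H|)%N =
  ((#|F| * #|F|).-1 * (#|H| * #|F|))%N.
Proof.
by rewrite -card_gadj_pairs -card_hpairs_offdiag -card_hpairs_diag addnC cardsID card_hpairs.
Qed.

End Graph.

Lemma double_count_solve (q e n : nat) :
  (e * 2 * (q.+1 * q.+1) + q.+1 * n * q.+1 = (q * q * (q * q)).-1 * (q.+1 * (q * q)))%N ->
  2 * (e : int) = (q : int) ^+ 5 - (q : int) ^+ 4 + (q : int) ^+ 3 - (q : int) ^+ 2 - (n : int).
Proof.
have [->|q_gt0] := posnP q; first by case: e n => [|?] [|?].
move/(congr1 Posz); rewrite !(PoszD, PoszM) predn_int ?muln_gt0 ?q_gt0 // !PoszM !intS => count.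
have q1_neq0 : (1 + q%:Z) ^+ 2 != 0 by rewrite expf_neq0 // -intS.
have count' : (1 + q%:Z) ^+ 2 * (2 * e) =
    (q%:Z * q * (q * q) - 1) * ((1 + q) * (q * q)) - (1 + q%:Z) ^+ 2 * n.
  by rewrite -count; ring.
by apply: (mulfI q1_neq0); rewrite count'; ring.
Qed.

Theorem theorem4 (q : nat) (F : finFieldType) (H : {set F})
  (hq : exists p k : nat, [/\ prime p, (0 < k)%N & q = (p ^ k)%N])
  (hF : #|F| = (q ^ 2)%N)
  (H0 : 0 \notin H) (H1 : 1 \in H)
  (HM : forall x y, x \in H -> y \in H -> x * y \in H)
  (HV : forall x, x \in H -> x^-1 \in H)
  (Hcard : #|H| = q.+1) :
  (odd q ->
     2 * (#|gedges H| : int) =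
       (q : int) ^+ 5 - (q : int) ^+ 4 + (q : int) ^+ 3 - 2 * (q : int) ^+ 2 + 1)
  /\ ((exists k : nat, q = (2 ^ k)%N) ->
     2 * (#|gedges H| : int) =
       (q : int) ^+ 5 - (q : int) ^+ 4 + (q : int) ^+ 3 - 2 * (q : int) ^+ 2).
Proof.
have [p [k [p_pr k_gt0 def_q]]] := hq.
have hF' : #|F| = (q * q)%N by rewrite hF mulnn.
have q_gt0 : (0 < q)%N by rewrite def_q expn_gt0 prime_gt0.
have double_edges n : {in H, forall c, #|[set u : F * F | dot u u == c]| = n} ->
    2 * (#|gedges H| : int) =
      (q : int) ^+ 5 - (q : int) ^+ 4 + (q : int) ^+ 3 - (q : int) ^+ 2 - (n : int).
  move=> /card_dot_self_in count; apply: double_count_solve.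
  by rewrite -Hcard -hF' -count gedges_double_count.
split=> [q_odd | [k' def_q']].
  have pchar_p : p \in [pchar F].
    by apply: (card_finPcharP (n := (k * 2)%N)); rewrite // hF def_q -expnM.
  have two_neq0 : 2%:R != 0 :> F.
    apply: (pchar_odd_two_neq0 pchar_p).
    by move: q_odd; rewrite def_q oddX (negPf (lt0n_neq0 k_gt0)).
  have [i ii] : exists i : F, i ^+ 2 = -1.
    by apply: exists_sqrtN1; rewrite hF' dvd4_sqr_pred.
  have c_neq0 c : c \in H -> c != 0 by apply: contraTneq => ->.
  rewrite (double_edges _ (fun c cH => card_dot_self_eq_sqrtN1 ii two_neq0 (c_neq0 c cH))).
  by rewrite hF' predn_int ?muln_gt0 ?q_gt0 // (PoszM q q); ring.
have pchar2 : 2 \in [pchar F].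
  by apply: (card_finPcharP (n := (k' * 2)%N)); rewrite // hF def_q' -expnM.
by rewrite (double_edges _ (fun c _ => card_dot_self_eq_pchar2 c pchar2)) hF' (PoszM q q); ring.
Qed.
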